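(* Let $f\colon\mathbb Z_2\to\mathbb Z_2$ be a transitive T-function which is uniformly differentiable modulo $4$, and let $x_0\in\mathbb Z_2$. For $n,i\ge 0$ put $\chi_n^i=\delta_n(f^i(x_0))\in\{0,1\}$. Then there exists a binary sequence $(y(i))_{i=0}^\infty$, which does not depend on $n$ and whose shortest period has length $2^K$ for some integer $0\le K\le N_2(f)$, such that for every $n\ge N_2(f)+1$ and every $i=0,1,2,\ldots$, $$\chi_n^{i+2^{n-1}}\equiv\chi_{n-1}^i+\chi_n^i+\chi_{n-1}^0+\chi_n^0+\chi_n^{2^{n-1}}+y(i)\pmod 2.$$
   Context: $\mathbb Z_2$ denotes the ring of 2-adic integers; every $x\in\mathbb Z_2$ has a unique expansion $x=\sum_{j\ge0}\delta_j(x)2^j$ with $\delta_j(x)\in\{0,1\}$, and $\operatorname{ord}_2 h$ denotes the 2-adic valuation of $h$. A T-function is a map $f\colon\mathbb Z_2\to\mathbb Z_2$ such that $a\equiv b\pmod{2^s}$ implies $f(a)\equiv f(b)\pmod{2^s}$ for all $s$ (equivalently, $f$ is 1-Lipschitz for the 2-adic metric); then $f\bmod 2^n$ is a well-defined map of $\mathbb Z/2^n\mathbb Z$. $f$ is transitive if for every $n\ge1$ the reduced map $f\bmod 2^n$ is a permutation of $\mathbb Z/2^n\mathbb Z$ consisting of a single cycle (of length $2^n$). $f^i$ denotes the $i$-th iterate, $f^0=\mathrm{id}$. Given $M\ge1$, $f$ is uniformly differentiable modulo $2^M$ if there exist a function $f'_M\colon\mathbb Z_2\to\mathbb Z_2$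 (the derivative modulo $2^M$) and $K\in\mathbb N$ such that for all $x\in\mathbb Z_2$ and all nonzero $h\in\mathbb Z_2$ with $h\equiv0\pmod{2^K}$ one has $f(x+h)\equiv f(x)+f'_M(x)\,h\pmod{2^{\operatorname{ord}_2h+M}}$; the least such $K$ is denoted $N_M(f)$. *)

From mathcomp Require Import all_boot.
Set Implicit Arguments. Unset Strict Implicit. Unset Printing Implicit Defensive.

(* x : Z2 is the 2-adic integer sum_j delta_j(x) 2^j with delta_j(x) = x j. *)
Definition Z2 := nat -> bool.

Definition trunc (n : nat) (x : Z2) : nat := \sum_(j < n) (x j : nat) * 2 ^ j.

Definition z2add (x y : Z2) : Z2 :=
  fun j => odd ((trunc j.+1 x + trunc j.+1 y) %/ 2 ^ j).

Definition of_nat (a : nat) : Z2 := fun j => odd (a %/ 2 ^ j).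

Definition cong (s : nat) (x y : Z2) : Prop := trunc s x = trunc s y.

Definition is_Tfun (f : Z2 -> Z2) : Prop :=
  forall s a b, cong s a b -> cong s (f a) (f b).

Definition red (n : nat) (f : Z2 -> Z2) (a : nat) : nat := trunc n (f (of_nat a)).

Definition transitiveT (f : Z2 -> Z2) : Prop :=
  forall n, 0 < n ->
    (forall a b, a < 2 ^ n -> b < 2 ^ n -> red n f a = red n f b -> a = b) /\
    (forall a b, a < 2 ^ n -> b < 2 ^ n -> exists k, iter k (red n f) a = b).

(* f is uniformly differentiable modulo 2^M with constant K:
   there is f'_M such that for all x and all nonzero h with h = 0 mod 2^K,
   i.e. ord_2 h = j >= K, f(x+h) = f(x) + f'_M(x) h  (mod 2^(j+M)). *)
Definition unif_diff_K (M : nat) (f : Z2 -> Z2) (K : nat) : Prop :=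
  exists f' : Z2 -> Z2, forall (x h : Z2) (j : nat),
    h j -> (forall i, i < j -> h i = false) -> K <= j ->
    trunc (j + M) (f (z2add x h)) =
      (trunc (j + M) (f x) + trunc (j + M) (f' x) * trunc (j + M) h) %% 2 ^ (j + M).

Definition is_N (M : nat) (f : Z2 -> Z2) (N : nat) : Prop :=
  unif_diff_K M f N /\ forall K, unif_diff_K M f K -> N <= K.

Definition chi (f : Z2 -> Z2) (x0 : Z2) (n i : nat) : bool := iter i f x0 n.

Definition shortest_period (y : nat -> bool) (p : nat) : Prop :=
  0 < p /\ (forall i, y (i + p) = y i) /\
  (forall q, 0 < q -> (forall i, y (i + q) = y i) -> p <= q).

From mathcomp Require Import all_boot zify ring.
From Stdlib Require Import Classical Wf_nat.
Set Implicit Arguments. Unset Strict Implicit. Unset Printing Implicit Defensive.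

(* Transitivity makes [f^(2^m)] fix every [x] modulo [2^m] and flip its digit [m],
   so [f^(2^m) x = x + 2^m u] with [u] odd.  For [m >= N_2(f)], comparing the
   derivative expansions at [x] and at [f^(2^m) x] on the digits [m] and [m+1]
   shows that replacing [x] by [f x] changes [delta_1(u)] by [delta_1(f'(x))].
   Along the orbit of [x0] this bit therefore drifts by
   [y(i) = sum_(k < i) delta_1(f'(f^k x0))], which unfolds to the recurrence with
   [n = m+1].  Since [f^(2^(m+1))] flips digit [m+1] and fixes digit [m], the bit
   is invariant under [f^(2^m)]; so [y] has period [2^N], and its shortest period
   divides [2^N]. *)

Lemma trunc0 x : trunc 0 x = 0.
Proof. by rewrite /trunc big_ord0. Qed.

Lemma truncS n x : trunc n.+1 x = trunc n x + x n * 2 ^ n.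
Proof. by rewrite /trunc big_ord_recr. Qed.

Lemma truncD2 n x : trunc (n + 2) x = trunc n x + 2 ^ n * (x n + 2 * x n.+1).
Proof. rewrite addn2 !truncS expnS; ring. Qed.

Lemma trunc_lt n x : trunc n x < 2 ^ n.
Proof.
elim: n => [|n IH]; first by rewrite trunc0.
rewrite truncS expnS; case: (x n) => /=; lia.
Qed.

Lemma trunc_modS n x : trunc n.+1 x %% 2 ^ n = trunc n x.
Proof. by rewrite truncS addnC modnMDl modn_small // trunc_lt. Qed.

Lemma trunc_mod m n x : m <= n -> trunc n x %% 2 ^ m = trunc m x.
Proof.
elim: n => [|n IH]; first by rewrite leqn0 => /eqP ->; rewrite modn_small // trunc_lt.
rewrite leq_eqVlt => /orP [/eqP ->|]; first by rewrite modn_small // trunc_lt.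
rewrite ltnS => mn.
by rewrite -(modn_dvdm (trunc n.+1 x) (dvdn_exp2l 2 mn)) trunc_modS IH.
Qed.

Lemma trunc_bits0 n x : (forall i, i < n -> x i = false) -> trunc n x = 0.
Proof. by move=> x0; rewrite /trunc big1 // => i _; rewrite x0. Qed.

Lemma trunc_eq0 n x : trunc n x = 0 -> forall i, i < n -> x i = false.
Proof.
move=> x0 i lt_in; have := trunc_mod x lt_in.
rewrite x0 mod0n truncS => /esym/eqP; rewrite addn_eq0 muln_eq0 expn_eq0 /= orbF.
by case/andP=> _; case: (x i).
Qed.

Lemma odd_div_exp2_mod a j : odd (a %/ 2 ^ j) = odd ((a %% 2 ^ j.+1) %/ 2 ^ j).
Proof.
rewrite {1}(divn_eq a (2 ^ j.+1)) expnS mulnA divnMDl ?expn_gt0 //.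
by rewrite oddD oddM andbF.
Qed.

Lemma trunc_coherent (G : nat -> nat) (z : Z2) :
  (forall j, z j = odd (G j.+1 %/ 2 ^ j)) ->
  (forall m, G m.+1 = G m %[mod 2 ^ m]) ->
  forall m, trunc m z = G m %% 2 ^ m.
Proof.
move=> zG Gcoh; elim=> [|m IH]; first by rewrite trunc0 modn1.
rewrite truncS IH zG odd_div_exp2_mod.
set r := G m.+1 %% 2 ^ m.+1.
have r_low : r %% 2 ^ m = G m %% 2 ^ m by rewrite /r modn_dvdm ?Gcoh // dvdn_exp2l.
have r_high : r %/ 2 ^ m < 2.
  by rewrite ltn_divLR ?expn_gt0 // -expnS ltn_mod expn_gt0.
rewrite {2}(divn_eq r (2 ^ m)) r_low addnC; congr (_ * _ + _).
by move: r_high; case: (r %/ 2 ^ m) => [|[|]].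
Qed.

Lemma trunc_of_nat m a : trunc m (of_nat a) = a %% 2 ^ m.
Proof. exact: (@trunc_coherent (fun _ => a)). Qed.

Lemma trunc_add m x y : trunc m (z2add x y) = (trunc m x + trunc m y) %% 2 ^ m.
Proof.
apply: (@trunc_coherent (fun m => trunc m x + trunc m y)) => // k.
by rewrite -modnDm !trunc_modS.
Qed.

Lemma z2sub x x' : exists h, forall m, trunc m (z2add x h) = trunc m x'.
Proof.
pose G m := trunc m x' + (2 ^ m - trunc m x).
have GE m : G m + trunc m x = trunc m x' + 2 ^ m.
  by rewrite /G -addnA subnK // ltnW // trunc_lt.
exists (fun j => odd (G j.+1 %/ 2 ^ j)) => m.
have trunc_h k : trunc k (fun j => odd (G j.+1 %/ 2 ^ j)) = G k %% 2 ^ k.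
  apply: trunc_coherent => // j; apply/eqP; rewrite -(eqn_modDr (trunc j x)).
  have -> : G j.+1 + trunc j x = G j.+1 + trunc j.+1 x %[mod 2 ^ j].
    by rewrite -(modnDmr (G j.+1) (trunc j.+1 x)) trunc_modS.
  rewrite !GE addnC expnS modnMDl trunc_modS modnDr.
  by rewrite modn_small // trunc_lt.
rewrite trunc_add trunc_h modnDmr addnC GE -modnDm modnn addn0 modn_mod.
by rewrite modn_small // trunc_lt.
Qed.

Definition derivative_mod (M : nat) (f f' : Z2 -> Z2) (K : nat) : Prop :=
  forall (x h : Z2) (j : nat),
    h j -> (forall i, i < j -> h i = false) -> K <= j ->
    trunc (j + M) (f (z2add x h)) =
      (trunc (j + M) (f x) + trunc (j + M) (f' x) * trunc (j + M) h) %% 2 ^ (j + M).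

Section UniformDerivative.
Variables (M K : nat) (f f' : Z2 -> Z2).
Hypotheses (Tf : is_Tfun f) (df : derivative_mod M f f' K).

Lemma unif_diff_add x h j : K <= j -> trunc j h = 0 ->
  trunc (j + M) (f (z2add x h)) =
    (trunc (j + M) (f x) + trunc (j + M) (f' x) * trunc (j + M) h) %% 2 ^ (j + M).
Proof.
move=> Kj hj0; case: (boolP (has h (iota 0 (j + M)))) => [hh|]; last first.
  move/hasPn=> hlow; have h0 : trunc (j + M) h = 0.
    by apply: trunc_bits0 => i ilt; apply/negbTE/hlow; rewrite mem_iota.
  rewrite h0 muln0 addn0 modn_small ?trunc_lt //; apply: Tf.
  by rewrite /cong trunc_add h0 addn0 modn_small // trunc_lt.
have [k hk] : exists k, h k by case/hasP: hh => k _ hk; exists k.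
case: (ex_minnP (ex_intro _ k hk)) => v hv vmin.
have low i : i < v -> h i = false.
  by move=> iv; apply/negbTE/negP => /vmin; rewrite leqNgt iv.
have jv : j <= v by rewrite leqNgt; apply/negP => /(trunc_eq0 hj0); rewrite hv.
have jMv : j + M <= v + M by rewrite leq_add2r.
have := df x hv low (leq_trans Kj jv).
move/(congr1 (fun t => t %% 2 ^ (j + M))).
rewrite trunc_mod // modn_dvdm ?dvdn_exp2l // => ->.
by rewrite -modnDm -modnMm !trunc_mod // modnDmr.
Qed.

(* [f x' - f x = f'(x) (x' - x) mod 2^(j+M)], with both sides moved so that no
   subtraction occurs. *)
Lemma unif_diff_cong x x' j : K <= j -> cong j x x' ->
  trunc (j + M) (f x') + trunc (j + M) (f' x) * trunc (j + M) x =
  trunc (j + M) (f x) + trunc (j + M) (f' x) * trunc (j + M) x' %[mod 2 ^ (j + M)].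
Proof.
move=> Kj xx'; have [h xhx'] := z2sub x x'.
have hj0 : trunc j h = 0.
  have : trunc j x + trunc j h = trunc j x + 0 %[mod 2 ^ j].
    by rewrite addn0 -trunc_add xhx' -xx' modn_small // trunc_lt.
  by move/eqP; rewrite eqn_modDl mod0n modn_small ?trunc_lt // => /eqP.
have fxh : trunc (j + M) (f x') = trunc (j + M) (f (z2add x h)).
  by apply: Tf; rewrite /cong xhx'.
rewrite fxh unif_diff_add // -xhx' trunc_add -[RHS]modnDmr modnMmr modnDmr modnDml.
by congr (_ %% _); ring.
Qed.

End UniformDerivative.

Lemma trunc_iter_red (f : Z2 -> Z2) n k z : is_Tfun f ->
  trunc n (iter k f z) = iter k (red n f) (trunc n z).
Proof.
move=> Tf; elim: k => [//|k IH]; rewrite !iterS -IH /red; apply: Tf.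
by rewrite /cong trunc_of_nat modn_small // trunc_lt.
Qed.

Section CyclicPermutation.
Variables (M : nat) (g : nat -> nat).
Hypothesis g_lt : forall a, a < M -> g a < M.
Hypothesis g_inj : forall a b, a < M -> b < M -> g a = g b -> a = b.
Hypothesis g_trans : forall a b, a < M -> b < M -> exists k, iter k g a = b.

Lemma iter_lt k a : a < M -> iter k g a < M.
Proof. by move=> aM; elim: k => [//|k IH]; rewrite iterS g_lt. Qed.

Lemma iter_inj k a b : a < M -> b < M -> iter k g a = iter k g b -> a = b.
Proof.
move=> aM bM; elim: k => [//|k IH]; rewrite !iterS => /g_inj E.
by apply: IH; apply: E; apply: iter_lt.
Qed.

(* A fixed point of [g^p] with [0 < p < M] would confine the whole orbit, i.e.
   all of [0, M), to the [p] points [g^k a], [k < p]. *)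
Lemma iter_cycle_neq a p : a < M -> 0 < p < M -> iter p g a != a.
Proof.
move=> aM /andP [p0 pM]; apply/negP => /eqP gpa.
have gmpa n : iter (n * p) g a = a by elim: n => [//|n IH]; rewrite mulSn iterD IH gpa.
have orbit : {subset iota 0 M <= [seq iter k g a | k <- iota 0 p]}.
  move=> b; rewrite mem_iota add0n => /andP [_ bM].
  have [k <-] := g_trans aM bM.
  apply/mapP; exists (k %% p); first by rewrite mem_iota add0n ltn_mod p0.
  by rewrite {1}(divn_eq k p) addnC iterD gmpa.
have := uniq_leq_size (iota_uniq 0 M) orbit.
by rewrite size_map !size_iota leqNgt pM.
Qed.

Lemma iter_cycle_period a : a < M -> iter M g a = a.
Proof.
move=> aM; pose s := [seq iter k g a | k <- iota 0 M.+1].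
have s_dup : ~~ uniq s.
  apply/negP => us.
  have sub : {subset s <= iota 0 M}.
    by move=> b /mapP [k _ ->]; rewrite mem_iota add0n iter_lt.
  by have := uniq_leq_size us sub; rewrite size_map !size_iota ltnn.
have [i [j [ij js gij]]] := uniqPn 0 s_dup; rewrite size_map size_iota in js.
move: gij; rewrite !(nth_map 0) ?size_iota ?(ltn_trans ij) //.
rewrite !nth_iota ?(ltn_trans ij) // !add0n => gij.
have gji : iter (j - i) g a = a.
  apply: (@iter_inj i) => //; first exact: iter_lt.
  by rewrite -iterD subnKC ?gij // ltnW.
have : j - i <= M by rewrite leq_subLR -ltnS (leq_trans js) // ltnS leq_addl.
rewrite leq_eqVlt => /orP [/eqP <- //|ltM].
have : 0 < j - i < M by rewrite subn_gt0 ij.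
by move/(iter_cycle_neq aM); rewrite gji eqxx.
Qed.

End CyclicPermutation.

Section Transitive.
Variable f : Z2 -> Z2.
Hypotheses (Tf : is_Tfun f) (Trf : transitiveT f).

Lemma trunc_iter_exp2 k x : trunc k (iter (2 ^ k) f x) = trunc k x.
Proof.
case: k => [|k]; first by rewrite !trunc0.
have [inj tr] := Trf (ltn0Sn k).
rewrite trunc_iter_red //.
exact: (iter_cycle_period (g := red k.+1 f) (fun a _ => trunc_lt _ _) inj tr
          (trunc_lt _ _)).
Qed.

Lemma iter_exp2_bit k x : iter (2 ^ k) f x k = ~~ x k.
Proof.
have [inj tr] := Trf (ltn0Sn k).
have : trunc k.+1 (iter (2 ^ k) f x) != trunc k.+1 x.
  rewrite trunc_iter_red //; apply: (iter_cycle_neq (p := 2 ^ k) tr (trunc_lt _ _)).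
  by rewrite expn_gt0 /= ltn_exp2l.
rewrite !truncS trunc_iter_exp2 eqn_add2l.
by case: (iter (2 ^ k) f x k); case: (x k); rewrite ?mul1n ?mul0n ?eqxx.
Qed.

End Transitive.

Lemma eqn_mod_exp2_cancel m k P Q D A B C E :
  P + 2 ^ m * A + D * (Q + 2 ^ m * B) = P + 2 ^ m * C + D * (Q + 2 ^ m * E)
    %[mod 2 ^ (m + k)] ->
  A + D * B = C + D * E %[mod 2 ^ k].
Proof.
have regroup X Y :
  P + 2 ^ m * X + D * (Q + 2 ^ m * Y) = P + D * Q + 2 ^ m * (X + D * Y) by ring.
move/eqP; rewrite !regroup eqn_modDl expnD -!muln_modr eqn_pmul2l ?expn_gt0 //.
by move/eqP.
Qed.

Lemma flip_parity_mod4 (a b c d e g d0 d1 : bool) (D : nat) :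
  D = d0 + 2 * d1 %[mod 4] ->
  (~~ a + 2 * b) + D * (c + 2 * e) = (a + 2 * g) + D * (~~ c + 2 * d) %[mod 4] ->
  b (+) g (+) a = d (+) e (+) c (+) d1.
Proof.
move=> D4; rewrite -modnDmr -modnMml D4 modnMml modnDmr.
rewrite -[in X in _ = X]modnDmr -modnMml D4 modnMml modnDmr {D4 D}.
by case: a; case: b; case: c; case: d; case: e; case: g; case: d0; case: d1.
Qed.

(* The digit [delta_1(u)] of [u], where [f^(2^m) x = x + 2^m u (mod 2^(m+2))]. *)
Definition jump_bit (f : Z2 -> Z2) (m : nat) (x : Z2) : bool :=
  iter (2 ^ m) f x m.+1 (+) x m.+1 (+) x m.

Fixpoint deriv_parity (f f' : Z2 -> Z2) (x : Z2) (k : nat) : bool :=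
  if k is k.+1 then deriv_parity f f' x k (+) f' (iter k f x) 1 else false.

Lemma deriv_parityD f f' x i k :
  deriv_parity f f' x (i + k) =
    deriv_parity f f' x i (+) deriv_parity f f' (iter i f x) k.
Proof.
elim: k => [|k IH] /=; first by rewrite addn0 addbF.
by rewrite addnS /= IH addnC iterD addbA.
Qed.

Section JumpBit.
Variables (K : nat) (f f' : Z2 -> Z2).
Hypotheses (Tf : is_Tfun f) (Trf : transitiveT f) (df : derivative_mod 2 f f' K).

Lemma jump_bit_iter_exp2 m x : jump_bit f m (iter (2 ^ m) f x) = jump_bit f m x.
Proof.
rewrite /jump_bit -iterD addnn -mul2n -expnS !iter_exp2_bit //.
by case: (x m); case: (x m.+1); case: (iter (2 ^ m) f x m.+1).
Qed.

Lemma jump_bit_f m x : K <= m -> jump_bit f m (f x) = jump_bit f m x (+) f' x 1.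
Proof.
(* The derivative congruence between [x] and [f^(2^m) x], read on digits [m] and [m+1]. *)
move=> Km; have := unif_diff_cong Tf df Km (esym (trunc_iter_exp2 Tf Trf m x)).
rewrite -iterS iterSr !(truncD2 m (iter _ f _)) (truncD2 m x) (truncD2 m (f x)).
rewrite !trunc_iter_exp2 // !iter_exp2_bit //.
move/eqn_mod_exp2_cancel/(@flip_parity_mod4 _ _ _ _ _ _ (f' x 0)); apply.
rewrite -[4]/(2 ^ 2) trunc_mod ?leq_addl // !truncS trunc0.
by case: (f' x 0); case: (f' x 1).
Qed.

Lemma jump_bit_iter m k x :
  K <= m -> jump_bit f m (iter k f x) = jump_bit f m x (+) deriv_parity f f' x k.
Proof.
move=> Km; elim: k => [|k IH]; first by rewrite addbF.
by rewrite iterS jump_bit_f // IH /= addbA.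
Qed.

Lemma deriv_parity_exp2 m x : K <= m -> deriv_parity f f' x (2 ^ m) = false.
Proof.
move=> Km; have := jump_bit_iter (2 ^ m) x Km.
by rewrite jump_bit_iter_exp2; case: (jump_bit f m x); case: deriv_parity.
Qed.

End JumpBit.

Definition is_period (y : nat -> bool) (q : nat) : Prop := forall i, y (i + q) = y i.

Section Periods.
Variable y : nat -> bool.

Lemma is_period_mull p k : is_period y p -> is_period y (k * p).
Proof.
move=> yp; elim: k => [|k IH] i; first by rewrite addn0.
by rewrite mulSn [p + _]addnC addnA yp IH.
Qed.

Lemma is_periodB p q : is_period y p -> is_period y q -> p <= q -> is_period y (q - p).
Proof. by move=> yp yq pq i; rewrite -yp -addnA subnK. Qed.

Lemma is_period_modn p q : is_period y p -> is_period y q -> is_period y (q %% p).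
Proof.
move=> yp yq; rewrite modn_def; case: edivnP => d r /= qdr _.
have := is_periodB (is_period_mull d yp) yq.
by rewrite qdr addKn; apply; rewrite leq_addr.
Qed.

Lemma shortest_period_dvdn p q : shortest_period y p -> is_period y q -> p %| q.
Proof.
case=> p0 [yp pmin] yq; rewrite /dvdn; apply: contraT; rewrite -lt0n => qp.
have := pmin _ qp (is_period_modn yp yq).
by rewrite leqNgt ltn_mod p0.
Qed.

Lemma shortest_period_exists q : 0 < q -> is_period y q -> exists p, shortest_period y p.
Proof.
move=> q0 yq; pose P p := 0 < p /\ is_period y p.
have [p [[[p0 yp] pmin] _]] :=
  dec_inh_nat_subset_has_unique_least_element P (fun p => classic (P p))
    (ex_intro P q (conj q0 yq)).
by exists p; split; [|split] => // r r0 yr; apply/leP/pmin.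
Qed.

Lemma shortest_period_exp2 N :
  is_period y (2 ^ N) -> exists2 K, K <= N & shortest_period y (2 ^ K).
Proof.
move=> yN; have [p yp] := shortest_period_exists (expn_gt0 2 N) yN.
have := shortest_period_dvdn yp yN.
case/(dvdn_pfactor _ _ (pdiv_prime (isT : 1 < 2))) => K KN pK.
by exists K; rewrite pK in yp.
Qed.

End Periods.

Theorem theorem3p1 (f : Z2 -> Z2) (x0 : Z2) (N : nat) :
  is_Tfun f -> transitiveT f -> is_N 2 f N ->
  exists (y : nat -> bool) (K : nat),
    K <= N /\ shortest_period y (2 ^ K) /\
    forall n i, N.+1 <= n ->
      chi f x0 n (i + 2 ^ n.-1) =
        chi f x0 n.-1 i (+) chi f x0 n i (+) chi f x0 n.-1 0 (+) chi f x0 n 0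
        (+) chi f x0 n (2 ^ n.-1) (+) y i.
Proof.
move=> Tf Trf [[f' df] _].
have y_period : is_period (deriv_parity f f' x0) (2 ^ N).
  by move=> i; rewrite deriv_parityD (deriv_parity_exp2 Tf Trf df) // addbF.
have [K KN yK] := shortest_period_exp2 y_period.
exists (deriv_parity f f' x0), K; split=> //; split=> // [[|m]] i //; rewrite ltnS => Nm.
have := jump_bit_iter Tf Trf df i x0 Nm.
rewrite /chi /jump_bit /= addnC iterD.
by case: (iter _ f (iter i f x0) m.+1); case: (iter i f x0 m.+1); case: (iter i f x0 m);
  case: (iter (2 ^ m) f x0 m.+1); case: (x0 m.+1); case: (x0 m); case: deriv_parity.
Qed.
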